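(* Let $G_1$ and $G_2$ be two graphs of order $n$ which have the same Laplacian spectra but different degree sequences. Let $\Gamma$ be an arbitrary graph, where, if $G_1$ or $G_2$ has an isolated vertex, $\Gamma$ is assumed to have at least $2$ vertices. Then $G_1\vee\Gamma$ and $G_2\vee\Gamma$ have the same Laplacian spectra for every such $\Gamma$. Moreover, there is a finite set $S$ consisting of at most $n-1$ integers such that $Z_{G_1\vee\Gamma}\ne Z_{G_2\vee\Gamma}$ for every such $\Gamma$ whose order does not lie in $S$.
   Context: Graphs are finite and simple. The Laplacian of a graph is $L=D-A$ ($D$ degree matrix, $A$ adjacency matrix). The join $G\vee\Gamma$ is the disjoint union of $G$ and $\Gamma$ with all edges between a vertex of $G$ and a vertex of $\Gamma$ added. $Z_G$ is the Ihara zeta function: for a graph with $n_G$ vertices and $m_G$ edges, $Z_G(t)=(1-t^2)^{n_G-m_G}\det(I-tA+t^2(D-I))^{-1}$ (equivalently the product $\prod_{[\gamma]}(1-t^{\ell(\gamma)})^{-1}$ over rotation classes of primitive closed geodesics). *)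

From HB Require Import structures.
From mathcomp Require Import all_boot all_order all_algebra.
From mathcomp Require Import fraction.
Set Implicit Arguments. Unset Strict Implicit. Unset Printing Implicit Defensive.
Import Order.TTheory GRing.Theory Num.Theory.
Local Open Scope ring_scope.

Definition simple_graph (n : nat) (e : rel 'I_n) : Prop :=
  symmetric e /\ irreflexive e.

Definition deg (n : nat) (e : rel 'I_n) (x : 'I_n) : nat := #|[set y | e x y]|.

Definition degseq (n : nat) (e : rel 'I_n) : seq nat :=
  sort leq [seq deg e x | x <- enum 'I_n].

Definition has_isolated (n : nat) (e : rel 'I_n) : Prop :=
  exists x : 'I_n, deg e x = 0%N.

Definition nedges (n : nat) (e : rel 'I_n) : nat :=
  #|[set p : 'I_n * 'I_n | e p.1 p.2 && (p.1 < p.2)%N]|.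

Definition adjmx (R : pzRingType) (n : nat) (e : rel 'I_n) : 'M[R]_n :=
  \matrix_(i, j) (e i j)%:R.
Definition degmx (R : pzRingType) (n : nat) (e : rel 'I_n) : 'M[R]_n :=
  \matrix_(i, j) (if i == j then (deg e i)%:R else 0).
Definition laplacian (R : pzRingType) (n : nat) (e : rel 'I_n) : 'M[R]_n :=
  degmx R e - adjmx R e.

(* Same Laplacian spectrum (as multisets): equal characteristic polynomials
   of the (integer) Laplacian matrices. *)
Definition lap_cospectral (n : nat) (e1 e2 : rel 'I_n) : Prop :=
  char_poly (laplacian int e1) = char_poly (laplacian int e2).

Definition gjoin (n m : nat) (e : rel 'I_n) (g : rel 'I_m) : rel 'I_(n + m) :=
  fun x y =>
    match split x, split y with
    | inl a, inl b => e a b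
    | inr a, inr b => g a b
    | _, _ => true
    end.

(* Ihara zeta function, as a rational function in t with rational coefficients:
   Z_G(t) = (1 - t^2)^(n - m) / det(I - tA + t^2 (D - I)). *)
Definition ihara_det (n : nat) (e : rel 'I_n) : {poly rat} :=
  \det (1%:M - 'X *: map_mx polyC (adjmx rat e)
        + 'X ^+ 2 *: map_mx polyC (degmx rat e - 1%:M)).

Definition ihara_zeta (n : nat) (e : rel 'I_n) : {fraction {poly rat}} :=
  (@FracField.tofrac {poly rat} (1 - 'X ^+ 2)) ^ (n%:Z - (nedges e)%:Z) / FracField.tofrac (ihara_det e).

From HB Require Import structures.
From mathcomp Require Import all_boot all_order all_algebra.
From mathcomp Require Import perm fraction algC.
From mathcomp Require Import zify ring.
Import Order.TTheory GRing.Theory Num.Theory.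
Set Implicit Arguments. Unset Strict Implicit. Unset Printing Implicit Defensive.
Local Open Scope ring_scope.

(* In the join every vertex of G gains the |Γ| = m vertices of Γ as new
   neighbours and every vertex of Γ gains the n vertices of G, so the Laplacian
   of G ∨ Γ is block-structured with all-ones off-diagonal blocks.  As the
   Laplacian blocks have constant row sums 0, a Schur-complement computation
   gives, for large a,
     det(a - L(G ∨ Γ)) = χ_G(a - m) χ_Γ(a - n) (1 - nm / ((a - m)(a - n))),
   which depends on G only through its Laplacian characteristic polynomial χ_G.
   For the Ihara zeta function, cospectrality fixes the trace of L, hence the
   number of edges, so equal zeta functions force equal determinants
   det(I - tA + t^2 (D - I)); their coefficients of t^(2(n+m)) are det(D - I),
   i.e. ∏_i (d_i + m - 1) times a nonzero factor coming from Γ.  As a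
   polynomial in m, ∏_i (d_i + m - 1) is monic of degree n with roots 1 - d_i,
   so two different degree sequences give a nonzero difference of degree at
   most n - 1, which vanishes for at most n - 1 values of m. *)

Lemma split_lshift n m (i : 'I_n) : split (lshift m i) = inl i.
Proof. exact: (unsplitK (inl i)). Qed.

Lemma split_rshift n m (i : 'I_m) : split (rshift n i) = inr i.
Proof. exact: (unsplitK (inr i)). Qed.

Lemma gjoin_simple n m (e : rel 'I_n) (g : rel 'I_m) :
  simple_graph e -> simple_graph g -> simple_graph (gjoin e g).
Proof.
move=> [esym eirr] [gsym girr]; split.
  by move=> x y; rewrite /gjoin; case: (split x) => a; case: (split y) => b.
by move=> x; rewrite /gjoin; case: (split x).
Qed.

Lemma degE n (e : rel 'I_n) x : deg e x = (\sum_y e x y)%N.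
Proof. by rewrite /deg -sum1_card big_mkcond; apply: eq_bigr => y _; rewrite inE. Qed.

Lemma deg_gjoinl n m (e : rel 'I_n) (g : rel 'I_m) i :
  deg (gjoin e g) (lshift m i) = (deg e i + m)%N.
Proof.
rewrite !degE big_split_ord /=; congr (_ + _)%N.
  by apply: eq_bigr => j _; rewrite /gjoin !split_lshift.
rewrite (eq_bigr (fun=> 1%N)) => [|j _]; last by rewrite /gjoin split_lshift split_rshift.
by rewrite sum_nat_const card_ord muln1.
Qed.

Lemma deg_gjoinr n m (e : rel 'I_n) (g : rel 'I_m) j :
  deg (gjoin e g) (rshift n j) = (deg g j + n)%N.
Proof.
rewrite !degE big_split_ord /= addnC; congr (_ + _)%N.
  by apply: eq_bigr => i _; rewrite /gjoin !split_rshift.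
rewrite (eq_bigr (fun=> 1%N)) => [|i _]; last by rewrite /gjoin split_rshift split_lshift.
by rewrite sum_nat_const card_ord muln1.
Qed.

Lemma sum_deg n (e : rel 'I_n) : simple_graph e ->
  (\sum_x deg e x = 2 * nedges e)%N.
Proof.
move=> [esym eirr].
have nedgesE : nedges e = (\sum_x \sum_y (e x y && (x < y)%N))%N.
  rewrite /nedges -sum1_card big_mkcond pair_big /=.
  by apply: eq_bigr => -[x y] _; rewrite inE.
have nedgesE' : nedges e = (\sum_x \sum_y (e x y && (y < x)%N))%N.
  by rewrite nedgesE exchange_big; apply: eq_bigr => x _; apply: eq_bigr => y _; rewrite esym.
rewrite mul2n -addnn {1}nedgesE {1}nedgesE' -big_split; apply: eq_bigr => x _.
rewrite degE -big_split; apply: eq_bigr => y _.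
have [exy|] //= := boolP (e x y).
have : x != y by apply: contraTneq exy => ->; rewrite eirr.
by rewrite neq_ltn => /orP[] lt_xy; rewrite lt_xy ltnNge ltnW.
Qed.

Lemma nedges_gjoin n m (e : rel 'I_n) (g : rel 'I_m) :
  simple_graph e -> simple_graph g ->
  nedges (gjoin e g) = (nedges e + nedges g + n * m)%N.
Proof.
move=> se sg; apply/eqP; rewrite -(eqn_pmul2l (isT : (0 < 2)%N)).
rewrite -[(2 * nedges _)%N]sum_deg; last exact: gjoin_simple.
rewrite big_split_ord /=.
under eq_bigr do rewrite deg_gjoinl.
under [X in (_ + X)%N]eq_bigr do rewrite deg_gjoinr.
rewrite !big_split !sum_nat_const !card_ord /= !sum_deg //; apply/eqP; lia.
Qed.

Section Laplacian.

Variable R : comNzRingType.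

Lemma mulmx_laplacian_const n k (e : rel 'I_n) :
  laplacian R e *m (const_mx 1 : 'M_(n, k)) = 0.
Proof.
apply/matrixP => i j; rewrite !mxE.
under eq_bigr do rewrite !mxE mulr1.
rewrite sumrB (bigD1 i) //= eqxx big1 ?addr0 => [|l /negPf]; last by rewrite eq_sym => ->.
by rewrite degE natr_sum subrr.
Qed.

Lemma mxtrace_laplacian n (e : rel 'I_n) : simple_graph e ->
  \tr (laplacian R e) = (2 * nedges e)%:R.
Proof.
move=> se; rewrite -sum_deg // natr_sum; apply: eq_bigr => i _.
by rewrite !mxE eqxx se.2 subr0.
Qed.

Lemma scalar_subr_laplacian_gjoin n m (e : rel 'I_n) (g : rel 'I_m) (a : R) :
  a%:M - laplacian R (gjoin e g) =
  block_mx ((a - m%:R)%:M - laplacian R e) (const_mx 1)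
           (const_mx 1) ((a - n%:R)%:M - laplacian R g).
Proof.
apply/matrixP => i j; rewrite -[i]splitK -[j]splitK.
case: (split i) => i'; case: (split j) => j' /=.
- rewrite block_mxEul !mxE eq_lshift deg_gjoinl /gjoin !split_lshift natrD.
  by case: eqP => _ /=; ring.
- by rewrite block_mxEur !mxE eq_lrshift /gjoin split_lshift split_rshift /=; ring.
- by rewrite block_mxEdl !mxE eq_rlshift /gjoin split_rshift split_lshift /=; ring.
- rewrite block_mxEdr !mxE eq_rshift deg_gjoinr /gjoin !split_rshift natrD.
  by case: eqP => _ /=; ring.
Qed.

End Laplacian.

Lemma map_laplacian (R S : comNzRingType) (f : {rmorphism R -> S}) n (e : rel 'I_n) :
  map_mx f (laplacian R e) = laplacian S e.
Proof.
apply/matrixP => i j; rewrite !mxE rmorphB /= !rmorph_nat.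
by case: eqP; rewrite ?rmorph_nat ?rmorph0.
Qed.

Lemma char_poly_horner (R : comNzRingType) n (A : 'M[R]_n) a :
  (char_poly A).[a] = \det (a%:M - A).
Proof.
rewrite /char_poly -horner_evalE -det_map_mx; congr (\det _).
by apply/matrixP => i j; rewrite !mxE rmorphB rmorphMn /= !horner_evalE hornerX hornerC.
Qed.

Lemma lap_cospectral_nedges n (e1 e2 : rel 'I_n) : (0 < n)%N ->
  simple_graph e1 -> simple_graph e2 -> lap_cospectral e1 e2 ->
  nedges e1 = nedges e2.
Proof.
move=> n_gt0 s1 s2 cosp; have := char_poly_trace (laplacian int e1) n_gt0.
rewrite cosp char_poly_trace // !mxtrace_laplacian // => /eqP.
by rewrite eqr_opp eqr_nat eqn_pmul2l // => /eqP.
Qed.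

Section DetBlock.

Variable F : fieldType.

Lemma mulmx_const1 a b c :
  (const_mx 1 : 'M[F]_(a, b)) *m (const_mx 1 : 'M_(b, c)) = b%:R *: const_mx 1.
Proof.
apply/matrixP => i j; rewrite !mxE.
by under eq_bigr do rewrite !mxE mulr1; rewrite sumr_const card_ord mulr1.
Qed.

Lemma det_1Bmulmx n k (U : 'M[F]_(n, k)) (V : 'M[F]_(k, n)) :
  \det (1%:M - U *m V) = \det (1%:M - V *m U).
Proof.
have upper : block_mx 1%:M U V 1%:M *m block_mx 1%:M 0 (- V) 1%:M =
             block_mx (1%:M - U *m V) U 0 1%:M.
  by rewrite mulmx_block !mulmx1 !mul1mx !mulmx0 mulmxN !add0r subrr.
have lower : block_mx 1%:M U V 1%:M *m block_mx 1%:M (- U) 0 1%:M =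
             block_mx 1%:M 0 V (1%:M - V *m U).
  by rewrite mulmx_block !mulmx1 !mul1mx !mulmx0 mulmxN !addr0 addNr addrC.
have := congr1 determinant upper.
rewrite det_mulmx det_lblock det_ublock !det1 !mulr1 => <-.
have := congr1 determinant lower.
by rewrite det_mulmx det_ublock det_lblock !det1 !mul1r mulr1.
Qed.

Lemma det_1Bscale_const m (k : F) :
  \det ((1%:M : 'M[F]_m) - k *: const_mx 1) = 1 - k * m%:R.
Proof.
have -> : k *: (const_mx 1 : 'M[F]_m) =
          (k *: const_mx 1 : 'M_(m, 1)) *m (const_mx 1 : 'M_(1, m)).
  by rewrite -scalemxAl mulmx_const1 scale1r.
by rewrite det_1Bmulmx -scalemxAr mulmx_const1 scalerA det_mx11 !mxE mulr1.
Qed.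

(* Right multiplication by the unipotent [[1, -U/a], [0, 1]] kills the upper
   right block, since U is an eigenvector block of A. *)
Lemma det_block_eigen n m (A : 'M[F]_n) U V (B : 'M[F]_m) a :
  a != 0 -> A *m U = a *: U ->
  \det (block_mx A U V B) = \det A * \det (B - a^-1 *: (V *m U)).
Proof.
move=> a_neq0 AU; set T := block_mx 1%:M (- a^-1 *: U) 0 (1%:M : 'M_m).
have detT : \det T = 1 by rewrite det_ublock !det1 mulr1.
rewrite -[LHS]mulr1 -detT -det_mulmx mulmx_block !mulmx1 !mulmx0 !addr0.
rewrite -!scalemxAr AU scalerA mulNr mulVf // scaleN1r addNr det_lblock.
by rewrite scaleNr addrC.
Qed.

Lemma det_block_const n m (A : 'M[F]_n) (B : 'M[F]_m) a b :
  a != 0 -> b != 0 ->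
  A *m const_mx 1 = a *: (const_mx 1 : 'M_(n, m)) ->
  B *m const_mx 1 = b *: (const_mx 1 : 'M_m) ->
  \det (block_mx A (const_mx 1) (const_mx 1) B) =
  \det A * \det B * (1 - n%:R / a / b * m%:R).
Proof.
move=> a_neq0 b_neq0 AJ BJ; rewrite (det_block_eigen _ _ a_neq0 AJ) mulmx_const1.
have -> : B - a^-1 *: (n%:R *: const_mx 1) = B *m (1%:M - (n%:R / a / b) *: const_mx 1).
  by rewrite mulmxBr mulmx1 -scalemxAr BJ !scalerA divfK // mulrC.
by rewrite det_mulmx det_1Bscale_const mulrA.
Qed.

End DetBlock.

Lemma eq_poly_natr (R : numDomainType) (p q : {poly R}) c :
  (forall k : nat, p.[(k + c)%:R] = q.[(k + c)%:R]) -> p = q.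
Proof.
move=> pq; apply/eqP; rewrite -subr_eq0; apply/negPn/negP => pq_neq0.
set rs := [seq (k + c)%:R | k <- iota 0 (size (p - q))] : seq R.
have roots_rs : all (root (p - q)) rs.
  by apply/allP => _ /mapP[k _ ->]; rewrite /root hornerD hornerN pq subrr.
have uniq_rs : uniq rs.
  by rewrite map_inj_uniq ?iota_uniq // => k l /eqP; rewrite eqr_nat eqn_add2r => /eqP.
by have := max_poly_roots pq_neq0 roots_rs uniq_rs; rewrite size_map size_iota ltnn.
Qed.

Lemma lap_cospectral_gjoin n m (e1 e2 : rel 'I_n) (g : rel 'I_m) :
  lap_cospectral e1 e2 -> lap_cospectral (gjoin e1 g) (gjoin e2 g).
Proof.
pose f : {rmorphism int -> rat} := intr.
have lap_charE p (h : rel 'I_p) :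
    map_poly f (char_poly (laplacian int h)) = char_poly (laplacian rat h).
  by rewrite map_char_poly map_laplacian.
move=> cosp; apply: (@map_inj_poly _ _ f (@intr_inj _)) => //.
rewrite !lap_charE; apply: (@eq_poly_natr _ _ _ (n + m).+1) => k.
rewrite !char_poly_horner !scalar_subr_laplacian_gjoin.
set a : rat := (k + (n + m).+1)%:R.
have am_neq0 : a - m%:R != 0 by rewrite subr_eq0 eqr_nat; lia.
have an_neq0 : a - n%:R != 0 by rewrite subr_eq0 eqr_nat; lia.
have rowsum p k' (h : rel 'I_p) b :
    (b%:M - laplacian rat h) *m const_mx 1 = b *: (const_mx 1 : 'M_(p, k')).
  by rewrite mulmxBl mulmx_laplacian_const subr0 mul_scalar_mx.
rewrite !(det_block_const am_neq0 an_neq0 (rowsum _ _ _ _) (rowsum _ _ _ _)).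
by rewrite -!char_poly_horner -!lap_charE cosp.
Qed.

Section TopCoefficient.

Variables (R : comNzRingType) (k : nat).

Lemma size_prod_leq_mul I (r : seq I) (F : I -> {poly R}) :
  (forall i, (size (F i) <= k.+1)%N) ->
  (size (\prod_(i <- r) F i)%R <= (k * size r).+1)%N.
Proof.
move=> sizeF; elim: r => [|a r IHr]; first by rewrite big_nil size_poly1.
rewrite big_cons /= mulnS; apply: leq_trans (size_polyMleq _ _) _.
by move: (sizeF a) IHr; move: (size _) (size _) => x y; lia.
Qed.

Lemma coef_prod_mul I (r : seq I) (F : I -> {poly R}) :
  (forall i, (size (F i) <= k.+1)%N) ->
  (\prod_(i <- r) F i)`_(k * size r) = \prod_(i <- r) (F i)`_k.
Proof.
move=> sizeF; elim: r => [|a r IHr]; first by rewrite !big_nil muln0 coef1.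
have size_r := size_prod_leq_mul r sizeF.
rewrite !big_cons /= mulnS coefM.
have lt_k : (k < (k + k * size r).+1)%N by rewrite ltnS leq_addr.
rewrite (bigD1 (Ordinal lt_k)) //= addKn IHr [X in _ + X]big1 ?addr0 // => j neq_jk.
have [lt_jk | lt_kj | eq_jk] := ltngtP j k.
- by rewrite [X in _ * X]nth_default ?mulr0 //; apply: leq_trans size_r _; lia.
- by rewrite nth_default ?mul0r //; apply: leq_trans (sizeF a) lt_kj.
- by move: neq_jk; rewrite -val_eqE /= eq_jk eqxx.
Qed.

Lemma coef_det_mul N (M : 'M[{poly R}]_N) :
  (forall i j, (size (M i j) <= k.+1)%N) ->
  (\det M)`_(k * N) = \det (\matrix_(i, j) (M i j)`_k).
Proof.
move=> sizeM; rewrite /determinant coef_sum; apply: eq_bigr => s _.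
have size_enum : size (index_enum 'I_N) = N by rewrite -sum1_size sum1_card card_ord.
have := coef_prod_mul (index_enum 'I_N) (fun i => sizeM i ((s : {perm _}) i)).
rewrite size_enum => prodE; under [in RHS]eq_bigr do rewrite mxE.
by rewrite !mulr_sign; case: (odd_perm s); rewrite ?coefN prodE.
Qed.

End TopCoefficient.

Lemma ihara_det_coef_top n (e : rel 'I_n) :
  (ihara_det e)`_(2 * n) = \prod_i ((deg e i)%:R - 1).
Proof.
have coef_entry i j l :
    ((1%:M - 'X *: map_mx polyC (adjmx rat e)
      + 'X ^+ 2 *: map_mx polyC (degmx rat e - 1%:M)) i j)`_l =
    (if l == 0%N then (i == j)%:R else 0) - (if l == 1%N then adjmx rat e i j else 0)
    + (if l == 2%N then (degmx rat e - 1%:M) i j else 0).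
  rewrite !mxE coefD coefB coefXM coefXnM !coefC coefMn coef1.
  by case: l => [|[|[|l]]] //=; rewrite ?mul0rn ?subr0 ?addr0 ?sub0r ?add0r ?mulr1n.
rewrite /ihara_det coef_det_mul => [|i j]; last first.
  apply/leq_sizeP => l l_gt2; rewrite coef_entry.
  by case: l l_gt2 => [|[|[|l]]] //= _; rewrite subr0 addr0.
rewrite (_ : \matrix_(i, j) _ = diag_mx (\row_i ((deg e i)%:R - 1))) ?det_diag.
  by under eq_bigr do rewrite mxE.
apply/matrixP => i j; rewrite mxE coef_entry /= sub0r add0r !mxE.
by case: eqP; rewrite ?subr0.
Qed.

Definition deg_poly n (e : rel 'I_n) : {poly rat} :=
  \prod_(x <- [seq 1 - d%:R | d <- degseq e]) ('X - x%:P).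

Lemma deg_poly_monic n (e : rel 'I_n) : deg_poly e \is monic.
Proof. exact: monic_prod_XsubC. Qed.

Lemma deg_poly_inj n (e1 e2 : rel 'I_n) :
  deg_poly e1 = deg_poly e2 -> degseq e1 = degseq e2.
Proof.
have inj_root : injective (fun d : nat => 1 - d%:R : rat).
  by move=> d d' /eqP; rewrite (inj_eq (addrI 1)) eqr_opp eqr_nat => /eqP.
move/prod_XsubC_eq/(perm_map_inj inj_root) => perm_degseq.
by apply: (sorted_eq leq_trans anti_leq); rewrite ?sort_sorted //; apply: leq_total.
Qed.

Lemma size_deg_poly n (e : rel 'I_n) : size (deg_poly e) = n.+1.
Proof. by rewrite size_prod_XsubC size_map size_sort size_map size_enum_ord. Qed.

Lemma horner_deg_poly n (e : rel 'I_n) (m : nat) :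
  (deg_poly e).[m%:R] = \prod_i ((deg e i + m)%:R - 1).
Proof.
rewrite horner_prod big_map (perm_big _ (permEl (perm_sort _ _))) big_map big_enum /=.
by apply: eq_bigr => i _; rewrite hornerXsubC natrD; ring.
Qed.

Lemma size_sub_monic (R : nzRingType) (p q : {poly R}) :
  p \is monic -> q \is monic -> size p = size q -> (size (p - q)%R < size p)%N.
Proof.
move=> /monicP lead_p /monicP lead_q eq_size.
have p_gt0 : (0 < size p)%N by rewrite size_poly_gt0 -lead_coef_eq0 lead_p oner_neq0.
rewrite -(prednK p_gt0) ltnS; apply/leq_sizeP => j; rewrite leq_eqVlt coefB.
case/orP => [/eqP <- | lt_j].
  by rewrite -lead_coefE lead_p eq_size -lead_coefE lead_q subrr.
by rewrite !nth_default ?subrr // -?eq_size -(prednK p_gt0).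
Qed.

Lemma natr_roots_bound (p : {poly rat}) : p != 0 ->
  exists2 s : seq nat, (size s < size p)%N & forall k : nat, root p k%:R -> k \in s.
Proof.
move=> p_neq0; pose f : {rmorphism rat -> algC} := ratr.
have [r pE] := closed_field_poly_normal (map_poly f p).
have lead_neq0 : lead_coef (map_poly f p) != 0 by rewrite lead_coef_eq0 map_poly_eq0.
exists [seq Num.truncn z | z <- r].
  by rewrite size_map -(size_map_poly f p) pE size_scale // size_prod_XsubC.
move=> k; rewrite -(fmorph_root f) rmorph_nat pE rootZ // root_prod_XsubC => k_r.
by apply/mapP; exists k%:R; rewrite ?natrK.
Qed.

Lemma ihara_det_eq n (e1 e2 : rel 'I_n) : nedges e1 = nedges e2 ->
  ihara_zeta e1 = ihara_zeta e2 -> ihara_det e1 = ihara_det e2.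
Proof.
rewrite /ihara_zeta => ->; set c := (_ ^ _).
have c_neq0 : c != 0.
  apply: expfz_neq0; rewrite tofrac_eq0; apply/eqP.
  move=> /(congr1 (fun p : {poly rat} => p`_0)) /eqP.
  by rewrite coefB coef1 coefXn /= subr0 coef0 oner_eq0.
by move/(mulfI c_neq0)/invr_inj/eqP; rewrite tofrac_eq => /eqP.
Qed.

Lemma prod_deg_gjoin n m (e : rel 'I_n) (g : rel 'I_m) :
  \prod_x ((deg (gjoin e g) x)%:R - 1) =
  (deg_poly e).[m%:R] * \prod_j ((deg g j + n)%:R - 1) :> rat.
Proof.
rewrite big_split_ord horner_deg_poly; congr (_ * _); apply: eq_bigr => i _.
  by rewrite deg_gjoinl.
by rewrite deg_gjoinr.
Qed.

Lemma ihara_zeta_gjoin_root n m (e1 e2 : rel 'I_n) (g : rel 'I_m) :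
  (1 < n)%N -> simple_graph e1 -> simple_graph e2 -> simple_graph g ->
  nedges e1 = nedges e2 -> ihara_zeta (gjoin e1 g) = ihara_zeta (gjoin e2 g) ->
  root (deg_poly e1 - deg_poly e2) m%:R.
Proof.
move=> n_gt1 s1 s2 sg nedges_eq zeta_eq.
have nedges_gjoin_eq : nedges (gjoin e1 g) = nedges (gjoin e2 g).
  by rewrite !nedges_gjoin // nedges_eq.
have := congr1 (fun p : {poly rat} => p`_(2 * (n + m))) (ihara_det_eq nedges_gjoin_eq zeta_eq).
rewrite /= !ihara_det_coef_top !prod_deg_gjoin => /mulIf eq_horner.
rewrite /root hornerD hornerN eq_horner ?subrr //.
by apply/prodf_neq0 => j _; rewrite subr_eq0 pnatr_eq1; lia.
Qed.

Lemma degseq_neq_gt1 n (e1 e2 : rel 'I_n) : irreflexive e1 -> irreflexive e2 ->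
  degseq e1 != degseq e2 -> (1 < n)%N.
Proof.
move=> irr1 irr2; rewrite ltnNge; apply: contra => n_le1.
have deg0 (e : rel 'I_n) x : irreflexive e -> deg e x = 0%N.
  move=> irr; rewrite degE big1 // => y _.
  by rewrite (_ : y = x) ?irr //; apply: ord_inj; move: (ltn_ord x) (ltn_ord y); lia.
by rewrite /degseq; apply/eqP; congr sort; apply: eq_map => x; rewrite !deg0.
Qed.

Theorem proposition4p6 (n : nat) (e1 e2 : rel 'I_n) :
  simple_graph e1 -> simple_graph e2 ->
  lap_cospectral e1 e2 ->
  degseq e1 != degseq e2 ->
  (forall (m : nat) (g : rel 'I_m), (0 < m)%N -> simple_graph g ->
     (has_isolated e1 \/ has_isolated e2 -> (2 <= m)%N) ->
     lap_cospectral (gjoin e1 g) (gjoin e2 g))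
  /\
  (exists S : seq nat, (size S <= n.-1)%N /\
     forall (m : nat) (g : rel 'I_m), (0 < m)%N -> simple_graph g ->
       (has_isolated e1 \/ has_isolated e2 -> (2 <= m)%N) ->
       m \notin S ->
       ihara_zeta (gjoin e1 g) != ihara_zeta (gjoin e2 g)).
Proof.
move=> s1 s2 cosp neq_degseq; split=> [m g _ _ _|].
  exact: lap_cospectral_gjoin.
have n_gt1 := degseq_neq_gt1 s1.2 s2.2 neq_degseq.
have nedges_eq := lap_cospectral_nedges (ltnW n_gt1) s1 s2 cosp.
have D_neq0 : deg_poly e1 - deg_poly e2 != 0.
  by rewrite subr_eq0; apply: contra neq_degseq => /eqP/deg_poly_inj ->.
have [S size_S rootsS] := natr_roots_bound D_neq0.
have size_D : (size (deg_poly e1 - deg_poly e2)%R <= n)%N.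
  by rewrite -ltnS -(size_deg_poly e1) size_sub_monic ?deg_poly_monic ?size_deg_poly.
exists S; split=> [|m g _ sg _]; first by move: size_S size_D; lia.
apply: contra => /eqP zeta_eq; apply: rootsS.
exact: ihara_zeta_gjoin_root n_gt1 s1 s2 sg nedges_eq zeta_eq.
Qed.
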